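(* Let $G=(V_G,E_G)$ and $H=(V_H,E_H)$ be graphs on $n$ vertices with partitions $V_G=L_G\cup R_G$, $V_H=L_H\cup R_H$ into sets of size $n/2$, let $\alpha\ge1$ be a constant, let $d=\max\{2|E_H|/n,\ C\log^3 n\}$ for a sufficiently large constant $C$, and let $V_G^{<\alpha d}=\{u\in V_G:\deg(u,G)<\alpha d\}$. Suppose $|V_G^{<\alpha d}|\ge n/\alpha$. Let $\pi$ be uniformly random in $\Pi_{LR}$ and $F=G\boxplus_\pi H$. Consider the algorithm that sorts the vertices of $F$ by their degree in $F$, lets $L'$ be the $\lceil n/(3\alpha)\rceil$ vertices of smallest degree and $R'=V_F\setminus L'$, and outputs $(L',R')$. Then $(L',R')$ is a $\Theta(1)$-balanced cut, and with high probability (over $\pi$) the number of edges of $F$ between $L'$ and $R'$ is $O(dn)$.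
   Context: $\Pi_{LR}$ is the set of bijections $\pi:V_H\to V_G$ with $\pi(L_H)=L_G$, $\pi(R_H)=R_G$. $F=G\boxplus_\pi H$ is the graph on $V_G$ with edge set $E_G\cup\{(\pi(x),\pi(y)):(x,y)\in E_H\}$. A cut $(S,T)$ is $b$-balanced if $|S|,|T|\ge bn$; $\Theta(1)$-balanced means $b$-balanced for some constant $b>0$ (depending only on $\alpha$). *)

From HB Require Import structures.
From mathcomp Require Import all_boot all_order all_algebra.
From mathcomp Require Import fingroup perm.
From mathcomp Require Import reals exp.
Set Implicit Arguments. Unset Strict Implicit. Unset Printing Implicit Defensive.
Import Order.TTheory GRing.Theory Num.Theory.
Local Open Scope ring_scope.

Definition simple_graph (n : nat) (E : rel 'I_n) : Prop :=
  symmetric E /\ irreflexive E.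

Definition deg (n : nat) (E : rel 'I_n) (u : 'I_n) : nat := #|[set v | E u v]|.

Definition nedges (n : nat) (E : rel 'I_n) : nat :=
  (#|[set p : 'I_n * 'I_n | E p.1 p.2]| %/ 2)%N.

Definition PiLR (n : nat) (LG LH : {set 'I_n}) : {set {perm 'I_n}} :=
  [set p : {perm 'I_n} | (p @: LH == LG) && (p @: (~: LH) == ~: LG)].

Definition boxplus (n : nat) (G H : rel 'I_n) (p : {perm 'I_n}) : rel 'I_n :=
  fun x y => G x y || H ((p^-1)%g x) ((p^-1)%g y).

Definition cut_edges (n : nat) (E : rel 'I_n) (S : {set 'I_n}) : nat :=
  #|[set p : 'I_n * 'I_n | (p.1 \in S) && (p.2 \notin S) && E p.1 p.2]|.

(* L' is a possible output of the algorithm: a set of k vertices of smallest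
   degree in E (ties broken arbitrarily). *)
Definition smallest_deg_set (n : nat) (E : rel 'I_n) (k : nat) (L : {set 'I_n}) : bool :=
  (#|L| == k) && [forall x, forall y, ((x \in L) && (y \notin L)) ==> (deg E x <= deg E y)%N].

Definition dparam (R : realType) (n : nat) (H : rel 'I_n) (C : R) : R :=
  Num.max (2 * (nedges H)%:R / n%:R) (C * (ln (n%:R : R)) ^+ 3).

Definition nlow (R : realType) (n : nat) (G : rel 'I_n) (t : R) : nat :=
  #|[set u | (deg G u)%:R < t]|.

Definition kparam (R : realType) (n : nat) (alpha : R) : nat :=
  `|Num.ceil (n%:R / (3 * alpha))|%N.

From HB Require Import structures.
From mathcomp Require Import all_boot all_order all_algebra.
From mathcomp Require Import fingroup perm.
From mathcomp Require Import reals exp.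
From mathcomp Require Import ring lra.

(* The cut bound holds for every pi in Pi_LR, so the probability is in fact 1.
   Every vertex u of F = G [+]_pi H has degree at most deg_G u + deg_H (pi^-1 u).
   At least n/alpha vertices have G-degree below alpha d, while, the H-degrees
   summing to 2|E_H| <= d n, by Markov at most about n/(3 alpha) vertices have
   H-degree at least 3 alpha d.  Hence at least k = ceil(n/(3 alpha)) vertices of F
   have degree below 4 alpha d, so the k vertices of smallest degree all do, and at
   most 4 alpha d k = O(d n) edges leave them.  Balance is immediate from |L'| = k. *)

Set Implicit Arguments.
Unset Strict Implicit.
Unset Printing Implicit Defensive.
Import Order.TTheory GRing.Theory Num.Theory.
Local Open Scope ring_scope.

Section PermMappingSet.
Variables (T : finType) (A B : {set T}).
Hypothesis cardAB : #|A| = #|B|.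

Let src := enum B ++ enum (~: B).
Let dst := enum A ++ enum (~: A).

Let size_enumC : size (enum (~: A)) = size (enum (~: B)).
Proof. by rewrite -!cardE; apply/eqP; rewrite -(eqn_add2l #|A|) cardsC cardAB cardsC. Qed.

Let mem_src x : x \in src.
Proof. by rewrite mem_cat !mem_enum in_setC orbN. Qed.

Let index_src_lt x : (index x src < size dst)%N.
Proof. by rewrite size_cat -!cardE cardAB !cardE size_enumC -size_cat index_mem. Qed.

Let f x := nth x dst (index x src).

Let f_inj : injective f.
Proof.
move=> x y /eqP; rewrite /f (set_nth_default x y (index_src_lt y)).
rewrite nth_uniq ?index_src_lt // => [/eqP|]; first exact: index_inj.
by rewrite cat_uniq !enum_uniq andbT; apply/hasPn => z; rewrite !mem_enum inE => /negbTE ->.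
Qed.

Let mem_f x : (f x \in A) = (x \in B).
Proof.
have sizeAB : size (enum A) = size (enum B) by rewrite -!cardE.
rewrite /f /src index_cat mem_enum nth_cat sizeAB.
have [xB | xB] := boolP (x \in B).
  by rewrite index_mem mem_enum xB -(mem_enum A) mem_nth // sizeAB index_mem mem_enum.
rewrite ltnNge leq_addr /= addKn.
have xC : x \in enum (~: B) by rewrite mem_enum inE.
by apply/negbTE; rewrite -in_setC -(mem_enum (~: A)) mem_nth // size_enumC index_mem.
Qed.

Lemma exists_perm_imset : exists p : {perm T}, p @: B = A /\ p @: (~: B) = ~: A.
Proof.
pose p := perm f_inj.
have pE : p =1 f := permE f_inj.
have imB : p @: B = A.
  by apply/setP => y; rewrite -[p]invgK im_permV inE -mem_f -pE permKV.
by exists p; rewrite -[p]invgK !im_permV preimsetC -im_permV invgK imB.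
Qed.

End PermMappingSet.

Lemma PiLR_neq0 n (LG LH : {set 'I_n}) : #|LG| = #|LH| -> PiLR LG LH != set0.
Proof.
move=> /exists_perm_imset [p [imL imR]].
by apply/set0Pn; exists p; rewrite inE imL imR !eqxx.
Qed.

Lemma card_rel_pairs (T : finType) (E : rel T) :
  #|[set q : T * T | E q.1 q.2]| = (\sum_x #|[set y | E x y]|)%N.
Proof.
rewrite -sum1_card big_mkcond /=.
rewrite (eq_bigr (fun q => nat_of_bool (E q.1 q.2))) => [|[x y] _]; last first.
  by rewrite inE; case: E.
rewrite -(pair_bigA _ (fun x y => nat_of_bool (E x y))); apply: eq_bigr => x _.
by rewrite -sum1_card [RHS]big_mkcond; apply: eq_bigr => y _; rewrite inE; case: E.
Qed.

(* [nedges] rounds down, and the [+ 1] spares us symmetry and irreflexivity. *)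
Lemma sum_deg_le n (H : rel 'I_n) : (\sum_u deg H u <= 2 * nedges H + 1)%N.
Proof.
rewrite -card_rel_pairs /nedges {1}(divn_eq #|[set q : 'I_n * 'I_n | H q.1 q.2]| 2).
by rewrite mulnC leq_add2l -ltnS ltn_mod.
Qed.

Lemma deg_boxplus_le n (G H : rel 'I_n) (p : {perm 'I_n}) u :
  (deg (boxplus G H p) u <= deg G u + deg H ((p^-1)%g u))%N.
Proof.
rewrite /deg -[X in (_ <= _ + X)%N](card_imset _ (@perm_inj _ p)).
apply: leq_trans (leq_card_setU _ _); apply: subset_leq_card.
apply/subsetP => v; rewrite !inE => /orP[-> // | H_uv].
by apply/orP; right; apply/imsetP; exists ((p^-1)%g v); rewrite ?inE ?permKV.
Qed.

Lemma sum_deg_boxplus_perm n (H : rel 'I_n) (p : {perm 'I_n}) :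
  (\sum_u deg H ((p^-1)%g u) = \sum_u deg H u)%N.
Proof. by rewrite (reindex_inj (@perm_inj _ p)); apply: eq_bigr => u _; rewrite permK. Qed.

Lemma markov_count (T : finType) (R : numDomainType) (f : T -> nat) (t : R) :
  t * #|[set u | t <= (f u)%:R]|%:R <= (\sum_u f u)%:R.
Proof.
set S := [set u | _].
apply: (@le_trans _ _ (\sum_(u in S) (f u)%:R)).
  by rewrite -sum1_card natr_sum mulr_sumr; apply: ler_sum => u; rewrite inE mulr1.
by rewrite natr_sum [X in _ <= X](bigID [in S]) /= lerDl sumr_ge0.
Qed.

Lemma smallest_deg_set_sub n (E : rel 'I_n) k (L S : {set 'I_n}) :
  smallest_deg_set E k L ->
  (forall x y, (deg E x <= deg E y)%N -> y \in S -> x \in S) ->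
  (k <= #|S|)%N -> L \subset S.
Proof.
move=> /andP[/eqP cardL L_min] S_down k_le.
apply/subsetP => x xL; apply/negPn/negP => xS.
have S_sub : S \subset L :\ x.
  apply/subsetP => y yS; rewrite !inE; apply/andP; split.
    by apply: contraNneq xS => <-.
  apply/negPn/negP => yL; move/negP: xS; apply; apply: S_down yS.
  by have /forallP/(_ y) := forallP L_min x; rewrite xL yL.
by have := leq_trans k_le (subset_leq_card S_sub); rewrite -cardL (cardsD1 x L) xL ltnn.
Qed.

Lemma cut_edges_le_sum_deg n (E : rel 'I_n) (L : {set 'I_n}) :
  (cut_edges E L <= \sum_(x in L) deg E x)%N.
Proof.
apply: (@leq_trans #|[set q : 'I_n * 'I_n | (q.1 \in L) && E q.1 q.2]|).
  by apply: subset_leq_card; apply/subsetP => q; rewrite !inE => /andP[/andP[-> _] ->].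
rewrite (@card_rel_pairs _ (fun x y => (x \in L) && E x y)).
rewrite [X in (_ <= X)%N]big_mkcond; apply: leq_sum => x _.
by case: (x \in L) => //=; rewrite leqn0 cards_eq0; apply/eqP/setP => y; rewrite !inE.
Qed.

Lemma count_arith (R : realFieldType) (alpha d m a b c l : R) :
  0 < alpha -> 1 <= d -> 3 * alpha + 1 <= m ->
  m <= alpha * a -> a <= c + b -> 3 * alpha * d * b <= d * m + 1 ->
  3 * alpha * l <= m + 3 * alpha -> 3 * alpha * d * l <= 3 * alpha * d * c.
Proof.
move=> alpha_gt0 d_ge1 m_ge a_ge ab_le b_le l_le.
have d_gt0 : 0 < d by lra.
have h1 : 3 * d * m <= 3 * d * (alpha * a) by rewrite ler_pM2l ?mulr_gt0.
have h2 : 3 * alpha * d * a <= 3 * alpha * d * (c + b) by rewrite ler_pM2l ?mulr_gt0.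
have h3 : d * (3 * alpha * l) <= d * (m + 3 * alpha) by rewrite ler_pM2l.
have h4 : 0 <= (d - 1) * (m - 3 * alpha - 1) by apply: mulr_ge0; lra.
lra.
Qed.

Section SmallestDegreeCut.
Variables (R : realType) (n : nat) (G H : rel 'I_n) (p : {perm 'I_n}).
Variables (alpha d : R) (k : nat).
Hypotheses (alpha_gt0 : 0 < alpha) (d_ge1 : 1 <= d).
Hypothesis nedgesH_le : 2 * (nedges H)%:R <= d * n%:R.
Hypothesis nlowG_ge : n%:R <= alpha * (nlow G (alpha * d))%:R.
Hypothesis k_le : 3 * alpha * k%:R <= n%:R + 3 * alpha.
Hypothesis n_ge : 3 * alpha + 1 <= n%:R.

Let F := boxplus G H p.
Let lowF := [set u | (deg F u)%:R < 4 * alpha * d].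
Let lowG := [set u | (deg G u)%:R < alpha * d].
Let highH := [set u | 3 * alpha * d <= (deg H ((p^-1)%g u))%:R].

Let card_highH : 3 * alpha * d * #|highH|%:R <= d * n%:R + 1.
Proof.
apply: le_trans (markov_count (fun u => deg H ((p^-1)%g u)) _) _.
rewrite sum_deg_boxplus_perm.
apply: (@le_trans _ _ (2 * nedges H + 1)%N%:R); first by rewrite ler_nat sum_deg_le.
by rewrite natrD natrM lerD2r.
Qed.

Let lowG_highH_sub : lowG :\: highH \subset lowF.
Proof.
apply/subsetP => u; rewrite !inE -ltNge => /andP[highHu lowGu].
apply: le_lt_trans (_ : _ <= (deg G u)%:R + (deg H ((p^-1)%g u))%:R) _.
  by rewrite -natrD ler_nat deg_boxplus_le.
by rewrite (_ : 4 * alpha * d = alpha * d + 3 * alpha * d); [exact: ltrD | ring].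
Qed.

Lemma k_le_card_lowF : (k <= #|lowF|)%N.
Proof.
apply: leq_trans (subset_leq_card lowG_highH_sub).
have card_lowG : (#|lowG| <= #|lowG :\: highH| + #|highH|)%N.
  by rewrite -(cardsID highH lowG) addnC leq_add2l subset_leq_card ?subsetIr.
have d_gt0 : 0 < d := lt_le_trans ltr01 d_ge1.
rewrite -(ler_nat R) -(ler_pM2l (_ : 0 < 3 * alpha * d)) ?mulr_gt0 //.
apply: count_arith alpha_gt0 d_ge1 n_ge nlowG_ge _ card_highH k_le => //.
by rewrite -natrD ler_nat.
Qed.

Lemma cut_edges_smallest_deg_set (L : {set 'I_n}) :
  smallest_deg_set F k L -> (cut_edges F L)%:R <= k%:R * (4 * alpha * d).
Proof.
move=> L_min; have L_sub : L \subset lowF.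
  apply: smallest_deg_set_sub L_min _ k_le_card_lowF => x y le_xy.
  by rewrite !inE; apply: le_lt_trans; rewrite ler_nat.
apply: (@le_trans _ _ (\sum_(x in L) deg F x)%N%:R).
  by rewrite ler_nat cut_edges_le_sum_deg.
case/andP: L_min => /eqP <- _; rewrite -sum1_card !natr_sum mulr_suml.
by apply: ler_sum => x /(subsetP L_sub); rewrite inE mul1r => /ltW.
Qed.

End SmallestDegreeCut.

Lemma dparam_ge1 (R : realType) n (H : rel 'I_n) (C : R) :
  (2 <= n)%N -> (ln 2 ^+ 3)^-1 <= C -> 1 <= dparam H C.
Proof.
move=> n_ge2 C_ge; have ln2_gt0 : 0 < ln (2 : R) by rewrite ln_gt0 // ltr1n.
have n_gt0 : (0 < n)%N by apply: leq_trans n_ge2.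
have ln_le : ln (2 : R) <= ln n%:R by rewrite ler_ln ?posrE ?ltr0n ?ler_nat.
have ln_le3 : ln (2 : R) ^+ 3 <= ln n%:R ^+ 3.
  by rewrite lerXn2r // nnegrE ltW // (lt_le_trans ln2_gt0).
rewrite /dparam le_max; apply/orP; right.
have ln2_3_gt0 : 0 < ln (2 : R) ^+ 3 by rewrite exprn_gt0.
apply: le_trans (ler_pM _ _ C_ge ln_le3); last exact: ltW.
  by rewrite mulVf ?lt0r_neq0.
by rewrite invr_ge0 ltW.
Qed.

Lemma nedges_le_dparam (R : realType) n (H : rel 'I_n) (C : R) :
  (0 < n)%N -> 2 * (nedges H)%:R <= dparam H C * n%:R.
Proof. by move=> n_gt0; rewrite -ler_pdivrMr ?ltr0n // /dparam le_max lexx. Qed.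

Lemma kparamE (R : realType) n (alpha : R) : 0 < alpha ->
  (kparam n alpha)%:R = (Num.ceil (n%:R / (3 * alpha)))%:~R :> R.
Proof.
move=> alpha_gt0; rewrite /kparam natr_absz ger0_norm // ceil_ge0.
by apply: lt_le_trans (divr_ge0 (ler0n _ _) (ltW _)); rewrite ?ltrN10 ?mulr_gt0.
Qed.

Lemma kparam_bounds (R : realType) n (alpha : R) : 0 < alpha ->
  n%:R / (3 * alpha) <= (kparam n alpha)%:R < n%:R / (3 * alpha) + 1.
Proof.
move=> alpha_gt0; rewrite kparamE // ceil_ge -ltrBlDr.
by have := ceilB1_lt (n%:R / (3 * alpha)); rewrite intrB.
Qed.

Lemma smallest_deg_set_balanced (R : realType) n (E : rel 'I_n) (alpha : R)
    (L : {set 'I_n}) :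
  1 <= alpha -> 6 * alpha <= n%:R -> smallest_deg_set E (kparam n alpha) L ->
  (6 * alpha)^-1 * n%:R <= #|L|%:R /\ (6 * alpha)^-1 * n%:R <= #|~: L|%:R.
Proof.
move=> alpha_ge1 n_ge /andP[/eqP cardL _].
have alpha_gt0 : 0 < alpha := lt_le_trans ltr01 alpha_ge1.
have /andP[] := kparam_bounds n alpha_gt0; rewrite -cardL.
have := cardsC L; rewrite card_ord => /(congr1 (fun m => m%:R : R)); rewrite natrD.
have -> : (6 * alpha)^-1 * n%:R = n%:R / (3 * alpha) / 2 by field; rewrite lt0r_neq0.
have x_le : 3 * (n%:R / (3 * alpha)) <= n%:R.
  rewrite (_ : 3 * _ = n%:R / alpha); last by field; rewrite lt0r_neq0.
  by rewrite ler_pdivrMr // ler_peMr.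
have x_ge0 : 0 <= n%:R / (3 * alpha) by rewrite divr_ge0 // ltW // mulr_gt0.
move: x_le x_ge0; set x := n%:R / (3 * alpha); lra.
Qed.

Lemma cut_edges_le_kparam (R : realType) n (G H : rel 'I_n) (p : {perm 'I_n})
    (alpha d : R) (L : {set 'I_n}) :
  1 <= alpha -> 1 <= d -> 6 * alpha <= n%:R -> 2 * (nedges H)%:R <= d * n%:R ->
  n%:R / alpha <= (nlow G (alpha * d))%:R ->
  smallest_deg_set (boxplus G H p) (kparam n alpha) L ->
  (cut_edges (boxplus G H p) L)%:R <= 2 * d * n%:R.
Proof.
move=> alpha_ge1 d_ge1 n_ge nedgesH_le nlowG_ge L_min.
have alpha_gt0 : 0 < alpha := lt_le_trans ltr01 alpha_ge1.
set k := kparam n alpha.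
have k_le : 3 * alpha * k%:R <= n%:R + 3 * alpha.
  have /andP[_ /ltW] := kparam_bounds n alpha_gt0.
  rewrite -(ler_pM2l (_ : 0 < 3 * alpha)) ?mulr_gt0 // mulrDr mulr1.
  by rewrite mulrCA mulfV ?mulr1 // mulf_neq0 // lt0r_neq0.
apply: le_trans
  (cut_edges_smallest_deg_set alpha_gt0 d_ge1 nedgesH_le _ k_le _ L_min) _.
- by rewrite mulrC -ler_pdivrMr.
- by apply: le_trans n_ge; lra.
have d_gt0 : 0 < d := lt_le_trans ltr01 d_ge1.
have h1 : d * (3 * alpha * k%:R) <= d * (n%:R + 3 * alpha) by rewrite ler_pM2l.
have h2 : d * (6 * alpha) <= d * n%:R by rewrite ler_pM2l.
lra.
Qed.

Theorem lemma12 (R : realType) (alpha : R) (halpha : 1 <= alpha) :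
  exists b : R, 0 < b /\
  exists C0 : R, forall C : R, C0 <= C ->
  exists K : R, 0 < K /\
  forall delta : R, 0 < delta ->
  exists N : nat, forall (n : nat), (N <= n)%N ->
  forall (G H : rel 'I_n) (LG LH : {set 'I_n}),
    simple_graph G -> simple_graph H ->
    (#|LG| * 2)%N = n -> (#|LH| * 2)%N = n ->
    let d := dparam H C in
    n%:R / alpha <= (nlow G (alpha * d))%:R ->
    (* (L', R') is Theta(1)-balanced, for every pi and every tie-breaking *)
    (forall p : {perm 'I_n}, p \in PiLR LG LH ->
       forall L' : {set 'I_n},
         smallest_deg_set (boxplus G H p) (kparam n alpha) L' ->
         b * n%:R <= #|L'|%:R /\ b * n%:R <= #|~: L'|%:R) /\
    (* w.h.p. over uniform pi in Pi_LR, the cut has O(d n) edges *)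
    1 - delta <=
      #|[set p in PiLR LG LH |
          [forall L' : {set 'I_n},
             smallest_deg_set (boxplus G H p) (kparam n alpha) L' ==>
             ((cut_edges (boxplus G H p) L')%:R <= K * d * n%:R)]]|%:R
      / #|PiLR LG LH|%:R.
Proof.
have alpha_gt0 : 0 < alpha := lt_le_trans ltr01 halpha.
exists (6 * alpha)^-1; split; first by rewrite invr_gt0 mulr_gt0.
exists (ln 2 ^+ 3)^-1 => C C_ge; exists 2; split => // delta delta_gt0.
exists (maxn 2 `|Num.ceil (6 * alpha)|%N) => n; rewrite geq_max => /andP[n_ge2 n_ge].
move=> G H LG LH _ _ cardLG cardLH d nlowG_ge.
have n_ge6a : 6 * alpha <= n%:R.
  have ceil_ge0' : 0 <= Num.ceil (6 * alpha).
    by rewrite ceil_ge0 (lt_le_trans (ltrN10 _)) // ltW // mulr_gt0.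
  by move: n_ge; rewrite -(ler_nat R) natr_absz ger0_norm //; apply: le_trans (ceil_ge _).
have d_ge1 : 1 <= d := dparam_ge1 H n_ge2 C_ge.
have nedgesH_le : 2 * (nedges H)%:R <= d * n%:R.
  by apply: nedges_le_dparam; apply: ltnW.
split=> [p _ L'|]; first exact: smallest_deg_set_balanced.
have PiLR_nz : PiLR LG LH != set0.
  by apply: PiLR_neq0; apply/eqP; rewrite -(eqn_pmul2r (isT : 0 < 2)%N) cardLG cardLH.
rewrite (_ : [set p in _ | _] = PiLR LG LH); last first.
  apply/setP => p; rewrite inE andb_idr // => _.
  by apply/forallP => L'; apply/implyP; exact: cut_edges_le_kparam.
by rewrite divff ?pnatr_eq0 ?cards_eq0 // gerBl ltW.
Qed.
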